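(* Under the setting described in the context, assume that for all $x\in\mathcal{A}$ and all $i\in\{1,\dots,n\}$, $$d_{xi}>0 \implies \phi_{ix}>0.$$ Define $$\tilde J(i)=\sum_{x\in\mathcal{A}}\phi_{ix}\,r^*_x,\qquad i=1,\dots,n,$$ and $$\epsilon=\max_{x\in\mathcal{A}}\ \max_{\{i,j\,:\,\phi_{ix}>0,\ \phi_{jx}>0\}}|J^*(i)-J^*(j)|.$$ Then $$|J^*(i)-\tilde J(i)|\le \frac{\epsilon}{1-\alpha},\qquad i=1,\dots,n.$$
   Context: Consider a discounted Markov decision problem with states $1,\dots,n$. For each state $i$ there is a finite nonempty control set $U(i)$. Under control $u\in U(i)$, the system moves from $i$ to $j$ with probability $p_{ij}(u)$ (with $\sum_j p_{ij}(u)=1$) and incurs cost $g(i,u,j)\in\mathbb{R}$. The cost at stage $k$ is discounted by $\alpha^k$, where $\alpha\in(0,1)$. A (deterministic stationary) policy $\mu$ selects $\mu(i)\in U(i)$ for each $i$. $J_\mu(i)$ denotes the total expected discounted cost of $\mu$ starting from $i$, and $J^*(i)=\min_\mu J_\mu(i)$. Equivalently, $J^*$ is the unique solution of $$J^*(i)=\min_{u\in U(i)}\sum_{j=1}^n p_{ij}(u)\big(g(i,u,j)+\alpha J^*(j)\big),\qquad i=1,\dots,n.$$ Aggregation framework: Let $\mathcal{A}$ be a finite set of ''aggregate states''. For each $x\in\mathcal{A}$ we are given a probability distribution $\{d_{xi}\}_{i=1}^n$ on $\{1,\dots,n\}$ (the disaggregation probabilities). For each original state $j$ we are given a probability distribution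 $\{\phi_{jy}\}_{y\in\mathcal{A}}$ on $\mathcal{A}$ (the aggregation probabilities). Define the operator $H:\mathbb{R}^{\mathcal{A}}\to\mathbb{R}^{\mathcal{A}}$ by $$(Hr)(x)=\sum_{i=1}^n d_{xi}\min_{u\in U(i)}\sum_{j=1}^n p_{ij}(u)\Big(g(i,u,j)+\alpha\sum_{y\in\mathcal{A}}\phi_{jy}\,r_y\Big),\qquad x\in\mathcal{A}.$$ $H$ is a contraction with respect to the maximum norm. Let $r^*=(r^*_x)_{x\in\mathcal{A}}$ be its unique fixed point $r^*=Hr^*$; this is the optimal cost vector of the aggregate problem. *)

From mathcomp Require Import all_boot all_order all_algebra.
Set Implicit Arguments. Unset Strict Implicit. Unset Printing Implicit Defensive.
Import Order.TTheory GRing.Theory Num.Theory.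
Local Open Scope ring_scope.

(* Minimum of f over a finite set S (value 0 if S is empty; only used for
   nonempty S). *)
Definition minU (R : realFieldType) (C : finType) (S : {set C}) (f : C -> R) : R :=
  match [pick u in S] with
  | Some u0 => \big[Num.min/f u0]_(u in S) f u
  | None => 0
  end.

Definition Qval (R : realFieldType) (n : nat) (C : finType)
  (p g : 'I_n -> C -> 'I_n -> R) (alpha : R) (V : 'I_n -> R) (i : 'I_n) (u : C) : R :=
  \sum_(j < n) p i u j * (g i u j + alpha * V j).

Definition bellmanT (R : realFieldType) (n : nat) (C : finType) (U : 'I_n -> {set C})
  (p g : 'I_n -> C -> 'I_n -> R) (alpha : R) (V : 'I_n -> R) (i : 'I_n) : R :=
  minU (U i) (Qval p g alpha V i).

Definition aggH (R : realFieldType) (n : nat) (C A : finType) (U : 'I_n -> {set C})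
  (p g : 'I_n -> C -> 'I_n -> R) (alpha : R)
  (d : A -> 'I_n -> R) (phi : 'I_n -> A -> R) (r : A -> R) (x : A) : R :=
  \sum_(i < n) d x i * bellmanT U p g alpha (fun j => \sum_(y : A) phi j y * r y) i.

Definition Jtilde (R : realFieldType) (n : nat) (A : finType)
  (phi : 'I_n -> A -> R) (r : A -> R) (i : 'I_n) : R :=
  \sum_(x : A) phi i x * r x.

(* epsilon = max_x max_{i,j : phi_ix>0, phi_jx>0} |J(i) - J(j)|
   (empty maxima default to 0, harmless since all terms are >= 0) *)
Definition aggEps (R : realFieldType) (n : nat) (A : finType)
  (phi : 'I_n -> A -> R) (J : 'I_n -> R) : R :=
  \big[Num.max/0]_(x : A)
    \big[Num.max/0]_(i < n | 0 < phi i x)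
      \big[Num.max/0]_(j < n | 0 < phi j x) `|J i - J j|.

From mathcomp Require Import all_boot all_order all_algebra.
From mathcomp Require Import ring lra.
Set Implicit Arguments. Unset Strict Implicit. Unset Printing Implicit Defensive.
Import Order.TTheory GRing.Theory Num.Theory.
Local Open Scope ring_scope.

(* Write [M] for the sup-distance between [J*] and [J~].  The Bellman operator
   is an [alpha]-contraction, so [r*_x = sum_k d_xk (T J~)(k)] is within
   [alpha M] of [sum_k d_xk J*(k)]; every [k] with [d_xk > 0] lies in the
   support of [phi_.x], hence [J*(k)] is within [epsilon] of [J*(i)] for any
   [i] with [phi_ix > 0].  Averaging over [x] with the weights [phi_ix] gives
   [|J*(i) - J~(i)| <= alpha M + epsilon] for all [i], i.e.
   [M <= alpha M + epsilon], whence [M <= epsilon / (1 - alpha)]. *)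

Section MinOverSet.

Variables (R : realFieldType) (C : finType) (S : {set C}).

Lemma minU_le (f : C -> R) u : u \in S -> minU S f <= f u.
Proof.
move=> uS; rewrite /minU; case: pickP => [u0 _|]; last by move/(_ u); rewrite uS.
by rewrite (bigD1 u) //= ge_min lexx.
Qed.

Lemma minU_ge (f : C -> R) c :
  S != set0 -> (forall u, u \in S -> c <= f u) -> c <= minU S f.
Proof.
move=> /set0Pn [w wS] cf; rewrite /minU; case: pickP => [u0 u0S|]; last first.
  by move/(_ w); rewrite wS.
by apply: (big_ind (fun v => c <= v)) => [|a b ca cb|k kS];
  [exact: cf | rewrite le_min ca cb | exact: cf].
Qed.

Lemma minU_lipschitz (f h : C -> R) c :
  S != set0 -> (forall u, u \in S -> `|f u - h u| <= c) ->
  `|minU S f - minU S h| <= c.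
Proof.
move=> S0 fh; have fh_le u : u \in S -> f u - c <= h u /\ h u - c <= f u.
  by move=> uS; have := fh u uS; rewrite ler_norml => /andP[]; split; lra.
have le_f : minU S h - c <= minU S f.
  by apply: minU_ge => // u uS; have := minU_le h uS; have [] := fh_le u uS; lra.
have le_h : minU S f - c <= minU S h.
  by apply: minU_ge => // u uS; have := minU_le f uS; have [] := fh_le u uS; lra.
by rewrite ler_norml; apply/andP; split; lra.
Qed.

End MinOverSet.

Section ConvexCombination.

Variables (R : realFieldType) (I : finType) (w : I -> R).
Hypotheses (w_ge0 : forall k, 0 <= w k) (w_sum1 : \sum_k w k = 1).

Lemma subr_convex_comb (x : R) (y : I -> R) :
  x - \sum_k w k * y k = \sum_k w k * (x - y k).
Proof.
under [RHS]eq_bigr => k _ do rewrite mulrBr.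
by rewrite sumrB -mulr_suml w_sum1 mul1r.
Qed.

Lemma norm_convex_comb_le (F : I -> R) c :
  (forall k, 0 < w k -> `|F k| <= c) -> `|\sum_k w k * F k| <= c.
Proof.
move=> Fc; apply: le_trans (ler_norm_sum _ _ _) _.
apply: (le_trans (y := \sum_k w k * c)); last by rewrite -mulr_suml w_sum1 mul1r.
apply: ler_sum => k _; rewrite normrM ger0_norm //.
have [->|wk0] := eqVneq (w k) 0; first by rewrite !mul0r.
by apply: ler_wpM2l => //; apply: Fc; rewrite lt_def wk0 w_ge0.
Qed.

End ConvexCombination.

Section BellmanContraction.

Variables (R : realFieldType) (n : nat) (C : finType) (U : 'I_n -> {set C}).
Variables (p g : 'I_n -> C -> 'I_n -> R) (alpha : R).
Hypotheses (U_neq0 : forall i, U i != set0)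
  (p_ge0 : forall i u j, u \in U i -> 0 <= p i u j)
  (p_sum1 : forall i u, u \in U i -> \sum_(j < n) p i u j = 1)
  (alpha_ge0 : 0 <= alpha).

Lemma Qval_sub (V W : 'I_n -> R) i u :
  Qval p g alpha V i u - Qval p g alpha W i u =
  \sum_(j < n) p i u j * (alpha * (V j - W j)).
Proof. by rewrite /Qval -sumrB; apply: eq_bigr => j _; ring. Qed.

Lemma bellmanT_lipschitz (V W : 'I_n -> R) c :
  (forall j, `|V j - W j| <= c) ->
  forall i, `|bellmanT U p g alpha V i - bellmanT U p g alpha W i| <= alpha * c.
Proof.
move=> VW i; apply: minU_lipschitz => // u uS; rewrite Qval_sub.
apply: norm_convex_comb_le => [j||j _]; [exact: p_ge0|exact: p_sum1|].
by rewrite normrM ger0_norm // ler_wpM2l.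
Qed.

End BellmanContraction.

Lemma aggEps_ge (R : realFieldType) (n : nat) (A : finType)
  (phi : 'I_n -> A -> R) (J : 'I_n -> R) x i k :
  0 < phi i x -> 0 < phi k x -> `|J i - J k| <= aggEps phi J.
Proof.
move=> phi_ix phi_kx; rewrite /aggEps.
apply: le_trans (le_bigmax _ _ x); apply: le_trans (le_bigmax_cond _ _ phi_ix).
exact: (le_bigmax_cond _ (fun j => `|J i - J j|) phi_kx).
Qed.

Lemma le_contraction_bound (R : realFieldType) (alpha M eps : R) :
  alpha < 1 -> M <= alpha * M + eps -> M <= eps / (1 - alpha).
Proof.
move=> alpha_lt1 M_le; rewrite ler_pdivlMr ?subr_gt0 //.
by rewrite mulrBr mulr1 lerBlDr addrC mulrC.
Qed.

Theorem mainTheorem1 (R : realFieldType) (n : nat) (C A : finType)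
  (U : 'I_n -> {set C}) (p g : 'I_n -> C -> 'I_n -> R) (alpha : R)
  (d : A -> 'I_n -> R) (phi : 'I_n -> A -> R)
  (Jstar : 'I_n -> R) (rstar : A -> R) :
  (forall i, U i != set0) ->
  (forall i u j, u \in U i -> 0 <= p i u j) ->
  (forall i u, u \in U i -> \sum_(j < n) p i u j = 1) ->
  0 < alpha -> alpha < 1 ->
  (forall x i, 0 <= d x i) -> (forall x, \sum_(i < n) d x i = 1) ->
  (forall j y, 0 <= phi j y) -> (forall j, \sum_(y : A) phi j y = 1) ->
  (forall i, Jstar i = bellmanT U p g alpha Jstar i) ->
  (forall x, rstar x = aggH U p g alpha d phi rstar x) ->
  (forall x i, 0 < d x i -> 0 < phi i x) ->
  forall i, `|Jstar i - Jtilde phi rstar i| <= aggEps phi Jstar / (1 - alpha).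
Proof.
move=> U0 p0 p1 alpha_gt0 alpha_lt1 d0 d1 phi0 phi1 J_fix r_fix d_phi.
set Jt := Jtilde phi rstar; set eps := aggEps phi Jstar.
set M := \big[Num.max/0]_(j < n) `|Jstar j - Jt j|.
have T_close k : `|Jstar k - bellmanT U p g alpha Jt k| <= alpha * M.
  rewrite {1}J_fix; apply: bellmanT_lipschitz => // [|j]; first exact: ltW.
  exact: le_bigmax.
have r_close x i : 0 < phi i x -> `|Jstar i - rstar x| <= alpha * M + eps.
  move=> phi_ix; rewrite [rstar x]r_fix /aggH subr_convex_comb //.
  apply: norm_convex_comb_le => // k d_xk.
  apply: le_trans (ler_distD (Jstar k) _ _) _.
  rewrite addrC; apply: lerD; first exact: T_close.
  exact: aggEps_ge phi_ix (d_phi _ _ d_xk).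
have Jt_close j : `|Jstar j - Jt j| <= alpha * M + eps.
  rewrite /Jt /Jtilde subr_convex_comb //.
  by apply: norm_convex_comb_le => // x; exact: r_close.
move=> i; apply: (le_trans (y := M)); first exact: le_bigmax.
apply: le_contraction_bound => //.
apply: bigmax_le => [|j _]; last exact: Jt_close.
have M_ge0 : 0 <= M by exact: bigmax_ge_id.
have eps_ge0 : 0 <= eps by exact: bigmax_ge_id.
by rewrite addr_ge0 // mulr_ge0 // ltW.
Qed.
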